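(* Let $W$ be a real vector space and $w_1,w_2,w_3,w_4\in W$. For $t\in[0,1]$ put $w_1(t)=(1-t)w_1+tw_2$, $w_2(t)=(1-t)w_2+tw_3$, $w_3(t)=(1-t)w_3+tw_1$, $w_4(t)=w_4$. Then $\operatorname{rank}(w_i)_{i=1}^4\ge 2$ if and only if $\operatorname{rank}(w_i(t))_{i=1}^4\ge 2$ for all $0\le t\le 1$.
   Context: The rank of a finite sequence of vectors is the dimension of the linear subspace they span. *)

From mathcomp Require Import all_boot all_order all_algebra.
From mathcomp Require Import boolp reals.
Set Implicit Arguments. Unset Strict Implicit. Unset Printing Implicit Defensive.
Import Order.TTheory GRing.Theory Num.Theory.
Local Open Scope ring_scope.

Section Rank.
Variables (R : pzRingType) (W : lmodType R).

Definition in_span (s : seq W) (v : W) : Prop :=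
  exists c : 'I_(size s) -> R, v = \sum_(i < size s) c i *: s`_i.

Definition lin_indep (v : seq W) : Prop :=
  forall c : 'I_(size v) -> R,
    \sum_(i < size v) c i *: v`_i = 0 -> forall i, c i = 0.

Definition span_has_indep (s : seq W) (k : nat) : Prop :=
  exists v : seq W, [/\ size v = k, lin_indep v & forall x, x \in v -> in_span s x].

(* rank of a finite sequence of vectors = dimension of the subspace they span,
   i.e. the maximal size of a linearly independent family in that span
   (this is at most size s). *)
Definition rank (s : seq W) : nat :=
  \max_(k < (size s).+1 | `[< span_has_indep s k >]) k.

End Rank.

(* Each rotated vector w_i(t) is a combination of the w_i via the circulant
   matrix circ(1-t, t, 0), whose determinant (1-t)^3 + t^3 = 3(t - 1/2)^2 + 1/4
   never vanishes.  Hence the two families span the same subspace for every t,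
   and have equal rank; the converse is the case t = 0. *)
From mathcomp Require Import all_boot all_order all_algebra.
From mathcomp Require Import boolp reals.
From mathcomp Require Import ring.
Set Implicit Arguments. Unset Strict Implicit.
Import Order.TTheory GRing.Theory Num.Theory.
Local Open Scope ring_scope.

Section Span.
Variables (R : pzRingType) (W : lmodType R).
Implicit Types (s : seq W) (x y z : W).

Lemma in_span_mem s x : x \in s -> in_span s x.
Proof.
move=> xs; pose i0 : 'I_(size s) := Ordinal (etrans (index_mem x s) xs).
exists (fun i => (i == i0)%:R); rewrite (bigD1 i0) //= eqxx scale1r nth_index //.
by rewrite big1 ?addr0 // => i /negbTE ->; rewrite scale0r.
Qed.

Lemma in_spanD s x y : in_span s x -> in_span s y -> in_span s (x + y).
Proof.
move=> [c ->] [d ->]; exists (fun i => c i + d i).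
by rewrite -big_split; apply: eq_bigr => i _; rewrite scalerDl.
Qed.

Lemma in_spanZ s (k : R) x : in_span s x -> in_span s (k *: x).
Proof.
move=> [c ->]; exists (fun i => k * c i).
by rewrite scaler_sumr; apply: eq_bigr => i _; rewrite scalerA.
Qed.

Lemma in_span_comb3 s v x y z (c1 c2 c3 : R) :
  v = c1 *: x + c2 *: y + c3 *: z -> x \in s -> y \in s -> z \in s ->
  in_span s v.
Proof.
by move=> -> xs ys zs; do !apply: in_spanD; apply: in_spanZ; apply: in_span_mem.
Qed.

Lemma in_span_trans s s' x :
  (forall y, y \in s -> in_span s' y) -> in_span s x -> in_span s' x.
Proof.
move=> ss' [c ->].
have: forall i : 'I_(size s), exists d : 'I_(size s') -> R,
    s`_i = \sum_(j < size s') d j *: s'`_j.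
  by move=> i; apply: ss'; apply: mem_nth.
case/choice => d sE; exists (fun j => \sum_(i < size s) c i * d i j).
under eq_bigr do rewrite sE scaler_sumr.
rewrite exchange_big /=; apply: eq_bigr => j _.
by rewrite scaler_suml; apply: eq_bigr => i _; rewrite scalerA.
Qed.

Lemma rank_le_span s s' : (size s <= size s')%N ->
  (forall x, x \in s -> in_span s' x) -> (rank s <= rank s')%N.
Proof.
move=> ss' sub; apply/bigmax_leqP => k /asboolP [v [vk vfree vs]].
have ks' : (k < (size s').+1)%N by apply: leq_trans (ltn_ord k) _.
apply: (@leq_bigmax_cond _ _ (fun i => nat_of_ord i) (Ordinal ks')).
apply/asboolP; exists v; split => // x /vs; exact: in_span_trans.
Qed.

End Span.

Section Circulant.
Variables (F : fieldType) (W : lmodType F) (a t : F).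
Hypothesis det_neq0 : a ^+ 3 + t ^+ 3 != 0.
Let D := a ^+ 3 + t ^+ 3.

Lemma circulant_inv (x y z : W) : x =
  (a ^+ 2 / D) *: (a *: x + t *: y) + (- (a * t) / D) *: (a *: y + t *: z)
  + (t ^+ 2 / D) *: (a *: z + t *: x).
Proof.
have cx : a ^+ 2 / D * a + t ^+ 2 / D * t = 1 by rewrite /D; field.
have cy : a ^+ 2 / D * t + - (a * t) / D * a = 0 by field.
have cz : - (a * t) / D * t + t ^+ 2 / D * a = 0 by field.
rewrite !scalerDr !scalerA.
set xt := (t ^+ 2 / D * t) *: x.
rewrite -!addrA [_ + xt]addrC (addrCA _ xt) (addrCA _ xt) (addrCA _ xt) !addrA.
rewrite -scalerDl cx scale1r -addrA -scalerDl cz scale0r addr0.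
by rewrite -addrA -scalerDl cy scale0r addr0.
Qed.

End Circulant.

Lemma cube_sum_gt0 {R : realFieldType} (t : R) : 0 < (1 - t) ^+ 3 + t ^+ 3.
Proof.
have -> : (1 - t) ^+ 3 + t ^+ 3 = 3%:R * (t - 2%:R^-1) ^+ 2 + 4%:R^-1.
  by rewrite !exprS expr0; field.
by rewrite ltr_wpDl ?invr_gt0 ?ltr0n // mulr_ge0 ?ler0n ?sqr_ge0.
Qed.

Theorem lemma2p3 (R : realType) (W : lmodType R) (w1 w2 w3 w4 : W) :
  leq 2 (rank [:: w1; w2; w3; w4]) <->
  (forall t : R, 0 <= t <= 1 ->
     leq 2 (rank [:: (1 - t) *: w1 + t *: w2; (1 - t) *: w2 + t *: w3;
                     (1 - t) *: w3 + t *: w1; w4])).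
Proof.
split; last first.
  by move=> /(_ 0); rewrite ler01 lexx subr0 !scale1r !scale0r !addr0; apply.
move=> rank2 t _; apply: (leq_trans rank2); apply: rank_le_span => // x.
have det_neq0 := lt0r_neq0 (cube_sum_gt0 t).
rewrite !inE => /or4P [] /eqP ->.
- by apply: in_span_comb3 (circulant_inv det_neq0 w1 w2 w3) _ _ _; rewrite !inE eqxx ?orbT.
- by apply: in_span_comb3 (circulant_inv det_neq0 w2 w3 w1) _ _ _; rewrite !inE eqxx ?orbT.
- by apply: in_span_comb3 (circulant_inv det_neq0 w3 w1 w2) _ _ _; rewrite !inE eqxx ?orbT.
- by apply: in_span_mem; rewrite !inE eqxx !orbT.
Qed.
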